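(* Let $n\geq 2$, $k_n=\lceil\log_2 n\rceil$ (so $n\in(2^{k_n-1},2^{k_n}]$), and let $T_n^{gfb}=(T_a,T_b)$ be the GFB tree with $n$ leaves, where $T_a,T_b$ have $n_a\geq n_b$ leaves. Then: (1) if $n\in(2^{k_n-1},3\cdot2^{k_n-2})$, then $n_a=n-2^{k_n-2}$ and $n_b=2^{k_n-2}$; in particular $T_b$ is the fully balanced tree of height $k_n-2$ and $\lceil\log_2 n_a\rceil=k_n-1$; (2) if $n=3\cdot2^{k_n-2}$, then $n_a=2^{k_n-1}$ and $n_b=2^{k_n-2}$; in particular $T_a$ and $T_b$ are the fully balanced trees of heights $k_n-1$ and $k_n-2$; (3) if $n\in(3\cdot2^{k_n-2},2^{k_n}]$, then $n_a=2^{k_n-1}$ and $n_b=n-2^{k_n-1}$; in particular $T_a$ is the fully balanced tree of height $k_n-1$ and $\lceil\log_2 n_b\rceil=k_n-1$.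
   Context: A rooted binary tree with $n\geq 2$ leaves is a rooted tree whose root has degree 2 and all other internal nodes have degree 3; for $n=1$ it is a single node. Trees are considered up to isomorphism. $T=(T_a,T_b)$ denotes the decomposition into the subtrees rooted at the two children of the root. The fully balanced tree of height $k$ is the rooted binary tree with $2^k$ leaves all at depth $k$. The GFB tree $T_n^{gfb}$ is the output of: start with $n$ single-node trees; while more than one tree remains, remove a tree $u$ of minimal size (number of leaves), then remove a tree $v$ of minimal size among the remaining ones, and insert the tree with a new root whose children are the roots of $u$ and $v$; output the remaining tree. *)

From Stdlib Require Import Arith List Permutation.
Import ListNotations.

(* Rooted binary trees (plane representation; isomorphism = [iso] below). *)
Inductive tree : Type :=
| Leaf : tree
| Node : tree -> tree -> tree.

Fixpoint size (t : tree) : nat :=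
  match t with
  | Leaf => 1
  | Node a b => size a + size b
  end.

Inductive iso : tree -> tree -> Prop :=
| iso_leaf : iso Leaf Leaf
| iso_keep a b a' b' : iso a a' -> iso b b' -> iso (Node a b) (Node a' b')
| iso_swap a b a' b' : iso a b' -> iso b a' -> iso (Node a b) (Node a' b').

Fixpoint fb (k : nat) : tree :=
  match k with
  | 0 => Leaf
  | S k => Node (fb k) (fb k)
  end.

Definition gfb_step (L L' : list tree) : Prop :=
  exists u v rest,
    Permutation L (u :: v :: rest) /\
    (forall w, In w (v :: rest) -> size u <= size w) /\
    (forall w, In w rest -> size v <= size w) /\
    L' = Node u v :: rest.

Inductive gfb_run : list tree -> tree -> Prop :=
| gfb_done t : gfb_run [t] t
| gfb_more L L' t : gfb_step L L' -> gfb_run L' t -> gfb_run L t.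

Definition is_gfb (n : nat) (T : tree) : Prop := gfb_run (repeat Leaf n) T.

(* During a run the forest always sits at some level j: each tree is fb j,
   fb (j+1), or a "middle" tree with strictly between 2^j and 2^(j+1) leaves,
   and there is at most one middle tree.  Merging two minimal trees preserves
   this: two copies of fb j give fb (j+1); any other merge uses up the last
   tree below fb (j+1), so all remaining trees are fb (j+1) and the merged
   tree belongs to level j+1.  Hence the final merge joins fb j with fb j,
   fb (j+1) or a middle tree, or a middle tree with fb (j+1); these four shapes
   give n = 2^(j+1) and the three ranges of n in the statement. *)

From Stdlib Require Import Arith Bool List Permutation Lia.
Import ListNotations.

Lemma size_fb j : size (fb j) = 2 ^ j.
Proof. induction j; simpl; lia. Qed.

Lemma iso_refl t : iso t t.
Proof. induction t; constructor; assumption. Qed.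

Lemma list_sum_repeat x n : list_sum (repeat x n) = n * x.
Proof. induction n as [| n IH]; simpl; lia. Qed.

Lemma Permutation_filter {A : Type} (f : A -> bool) (l l' : list A) :
  Permutation l l' -> Permutation (filter f l) (filter f l').
Proof.
  induction 1; simpl.
  - constructor.
  - destruct (f x); auto.
  - destruct (f x), (f y); auto using perm_swap, Permutation_refl.
  - eapply perm_trans; eassumption.
Qed.

Lemma filter_le1_cons {A : Type} (f : A -> bool) (x : A) (l : list A) :
  length (filter f (x :: l)) <= 1 -> f x = true -> forall y, In y l -> f y = false.
Proof.
  simpl. intros Hlen Hx y Hy. rewrite Hx in Hlen. simpl in Hlen.
  destruct (f y) eqn:Hfy; [| reflexivity].
  assert (Hin : In y (filter f l)) by (apply filter_In; auto).
  destruct (filter f l); simpl in *; [contradiction | lia].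
Qed.

Lemma log2_up_between j x : 2 ^ j < x <= 2 ^ S j -> Nat.log2_up x = S j.
Proof. intros Hx. apply Nat.log2_up_unique; [lia | exact Hx]. Qed.

Lemma gfb_run_size L t : gfb_run L t -> size t = list_sum (map size L).
Proof.
  induction 1 as [t | L L' t [u [v [rest [Hperm [_ [_ ->]]]]]] _ IH]; simpl.
  - lia.
  - rewrite (Permutation_list_sum (Permutation_map size Hperm)), IH. simpl. lia.
Qed.

Lemma is_gfb_size n T : is_gfb n T -> size T = n.
Proof.
  intros Hgfb. rewrite (gfb_run_size _ _ Hgfb), map_repeat, list_sum_repeat.
  apply Nat.mul_1_r.
Qed.

Lemma gfb_run_singleton x t : gfb_run [x] t -> t = x.
Proof.
  inversion 1 as [| ? L' ? [u [v [rest [Hperm _]]]]]; [reflexivity |].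
  apply Permutation_length in Hperm. discriminate.
Qed.

Definition middle (j : nat) (w : tree) : bool :=
  (2 ^ j <? size w) && (size w <? 2 ^ S j).

Lemma middle_spec j w : middle j w = true <-> 2 ^ j < size w < 2 ^ S j.
Proof. unfold middle. rewrite andb_true_iff, !Nat.ltb_lt. reflexivity. Qed.

Lemma middle_fb j : middle j (fb j) = false.
Proof.
  destruct (middle j (fb j)) eqn:E; [| reflexivity].
  apply middle_spec in E. rewrite size_fb in E. lia.
Qed.

Lemma middle_fbS j : middle j (fb (S j)) = false.
Proof.
  destruct (middle j (fb (S j))) eqn:E; [| reflexivity].
  apply middle_spec in E. rewrite size_fb in E. lia.
Qed.

Definition in_layer (j : nat) (w : tree) : Prop :=
  w = fb j \/ w = fb (S j) \/ middle j w = true.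

Definition layered_forest (j : nat) (L : list tree) : Prop :=
  Forall (in_layer j) L /\ length (filter (middle j) L) <= 1.

Lemma in_layer_above j w :
  in_layer j w -> 2 ^ j < size w -> middle j w = false -> w = fb (S j).
Proof.
  intros [-> | [-> | Hmid]] Hsize Hnot; try congruence.
  rewrite size_fb in Hsize. lia.
Qed.

Lemma in_layer_ge j w : in_layer j w -> 2 ^ S j <= size w -> w = fb (S j).
Proof.
  intros Hw Hsize. pose proof (Nat.pow_nonzero 2 j ltac:(lia)).
  apply in_layer_above; [assumption | simpl in *; lia |].
  destruct (middle j w) eqn:E; [apply middle_spec in E; lia | reflexivity].
Qed.

Lemma layered_forest_perm j L L' :
  Permutation L L' -> layered_forest j L -> layered_forest j L'.
Proof.
  intros Hperm [Hlayer Hmid]. split.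
  - exact (Permutation_Forall Hperm Hlayer).
  - rewrite <- (Permutation_length (Permutation_filter (middle j) _ _ Hperm)).
    exact Hmid.
Qed.

Lemma layered_forest_leaves n : layered_forest 0 (repeat Leaf n).
Proof.
  split.
  - apply Forall_forall. intros w Hw. apply repeat_spec in Hw as ->. left. reflexivity.
  - induction n as [| n IH]; [simpl; lia | exact IH].
Qed.

Lemma layered_forest_lift j t rest :
  in_layer (S j) t -> (forall w, In w rest -> w = fb (S j)) ->
  layered_forest (S j) (t :: rest).
Proof.
  intros Ht Hrest. split.
  - constructor; [assumption |]. apply Forall_forall. intros w Hw. left. auto.
  - assert (Hnil : filter (middle (S j)) rest = []).
    { rewrite <- (filter_false rest). apply filter_ext_in.
      intros w Hw. rewrite (Hrest w Hw). apply middle_fb. }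
    simpl. rewrite Hnil. destruct (middle (S j) t); simpl; lia.
Qed.

Definition merge_shape (j : nat) (u v : tree) : Prop :=
  (u = fb j /\ v = fb j) \/ (u = fb j /\ v = fb (S j)) \/
  (u = fb j /\ middle j v = true) \/ (middle j u = true /\ v = fb (S j)).

Lemma merge_shape_sorted j u v : merge_shape j u v -> u = v \/ size u < size v.
Proof.
  pose proof (Nat.pow_nonzero 2 j ltac:(lia)).
  intros [[-> ->] | [[-> ->] | [[-> Hmid] | [Hmid ->]]]];
    [left; reflexivity | right; rewrite ?middle_spec, ?size_fb in *; simpl in *; lia ..].
Qed.

Lemma gfb_step_layered j u v rest :
  layered_forest j (u :: v :: rest) ->
  (forall w, In w (v :: rest) -> size u <= size w) ->
  (forall w, In w rest -> size v <= size w) ->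
  (exists i, merge_shape i u v) /\ (exists i, layered_forest i (Node u v :: rest)).
Proof.
  intros [Hlayer Hmids] Hu Hv. rewrite Forall_forall in Hlayer.
  pose proof (Nat.pow_nonzero 2 j ltac:(lia)) as Hpos.
  destruct (Hlayer u ltac:(simpl; auto)) as [-> | [-> | Hmu]].
  - rewrite size_fb in Hu. cbn [filter] in Hmids. rewrite middle_fb in Hmids.
    destruct (Hlayer v ltac:(simpl; auto)) as [-> | [-> | Hmv]].
    + split; [exists j; left; auto |].
      exists j. split.
      * constructor; [right; left; reflexivity |].
        apply Forall_forall. intros w Hw. apply Hlayer. simpl; auto.
      * cbn [filter] in *. rewrite middle_fbS. rewrite middle_fb in Hmids. exact Hmids.
    + rewrite size_fb in Hv.
      split; [exists j; right; left; auto |].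
      exists (S j). apply layered_forest_lift.
      * right; right. apply middle_spec. simpl size. rewrite !size_fb. simpl; lia.
      * intros w Hw. apply in_layer_ge; [apply Hlayer; simpl; auto | auto].
    + split; [exists j; right; right; left; auto |].
      exists (S j). apply middle_spec in Hmv as Hsv. apply layered_forest_lift.
      * right; right. apply middle_spec. simpl size. rewrite !size_fb. simpl in *; lia.
      * intros w Hw. apply in_layer_above;
          [apply Hlayer; simpl; auto | specialize (Hv w Hw); lia |].
        exact (filter_le1_cons _ _ _ Hmids Hmv w Hw).
  - rewrite size_fb in Hu.
    assert (Hall : forall w, In w (v :: rest) -> w = fb (S j))
      by (intros w Hw; apply in_layer_ge; [apply Hlayer; simpl; auto | auto]).
    rewrite (Hall v ltac:(simpl; auto)).
    split; [exists (S j); left; auto |].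
    exists (S j). apply layered_forest_lift; [right; left; reflexivity |].
    intros w Hw. apply Hall. simpl; auto.
  - apply middle_spec in Hmu as Hsu.
    assert (Hall : forall w, In w (v :: rest) -> w = fb (S j)).
    { intros w Hw. apply in_layer_above;
        [apply Hlayer; simpl; auto | specialize (Hu w Hw); lia |].
      exact (filter_le1_cons _ _ _ Hmids Hmu w Hw). }
    rewrite (Hall v ltac:(simpl; auto)).
    split; [exists j; right; right; right; auto |].
    exists (S j). apply layered_forest_lift.
    + right; right. apply middle_spec. simpl size. rewrite !size_fb. simpl in *; lia.
    + intros w Hw. apply Hall. simpl; auto.
Qed.

Lemma gfb_run_merge_shape L t j :
  gfb_run L t -> layered_forest j L -> 2 <= length L ->
  exists i u v, t = Node u v /\ merge_shape i u v.
Proof.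
  intros Hrun. revert j.
  induction Hrun as [t | L L' t [u [v [rest [Hperm [Hu [Hv ->]]]]]] Hrun IH];
    intros j Hforest Hlen; [simpl in Hlen; lia |].
  destruct (gfb_step_layered j u v rest (layered_forest_perm j _ _ Hperm Hforest) Hu Hv)
    as [[i Hshape] [i' Hforest']].
  destruct rest as [| w rest].
  - apply gfb_run_singleton in Hrun. exists i, u, v. auto.
  - apply (IH i' Hforest'). simpl. lia.
Qed.

Lemma children_sorted u v Ta Tb :
  u = v \/ size u < size v ->
  Node u v = Node Ta Tb \/ Node u v = Node Tb Ta -> size Tb <= size Ta ->
  Ta = v /\ Tb = u.
Proof.
  intros Huv [E | E] Hle; injection E as -> ->; [| split; reflexivity].
  destruct Huv as [-> | Hlt]; [split; reflexivity | lia].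
Qed.

Theorem proposition2 (n : nat) (T Ta Tb : tree) :
  2 <= n ->
  is_gfb n T ->
  (T = Node Ta Tb \/ T = Node Tb Ta) ->
  size Tb <= size Ta ->
  let k := Nat.log2_up n in
  (* (1) n in (2^(k-1), 3*2^(k-2)), written as 2^k < 2n < ... *)
  (2 ^ k < 2 * n -> 4 * n < 3 * 2 ^ k ->
     size Ta = n - 2 ^ (k - 2) /\ size Tb = 2 ^ (k - 2) /\
     iso Tb (fb (k - 2)) /\ Nat.log2_up (size Ta) = k - 1) /\
  (* (2) n = 3*2^(k-2) *)
  (4 * n = 3 * 2 ^ k ->
     size Ta = 2 ^ (k - 1) /\ size Tb = 2 ^ (k - 2) /\
     iso Ta (fb (k - 1)) /\ iso Tb (fb (k - 2))) /\
  (* (3) n in (3*2^(k-2), 2^k] *)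
  (3 * 2 ^ k < 4 * n -> n <= 2 ^ k ->
     size Ta = 2 ^ (k - 1) /\ size Tb = n - 2 ^ (k - 1) /\
     iso Ta (fb (k - 1)) /\ Nat.log2_up (size Tb) = k - 1).
Proof.
  intros Hn Hgfb HT Hle k. subst k.
  pose proof (is_gfb_size _ _ Hgfb) as Hsize.
  destruct (gfb_run_merge_shape _ _ 0 Hgfb (layered_forest_leaves n))
    as [j [u [v [-> Hshape]]]]; [rewrite repeat_length; exact Hn |].
  destruct (children_sorted u v Ta Tb (merge_shape_sorted _ _ _ Hshape) HT Hle) as [-> ->].
  pose proof (Nat.pow_nonzero 2 j ltac:(lia)) as Hpos.
  simpl size in Hsize; subst n.
  destruct Hshape as [[-> ->] | Hshape].
  - rewrite size_fb, (log2_up_between j) by (simpl; lia).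
    simpl (S j - 1); rewrite Nat.sub_0_r, Nat.log2_up_pow2 by lia.
    repeat split; intros; simpl in *; auto using iso_refl; lia.
  - destruct Hshape as [[-> ->] | [[-> Hmid] | [Hmid ->]]];
      rewrite ?middle_spec, ?size_fb in *;
      rewrite (log2_up_between (S j)) by (simpl in *; lia);
      replace (S (S j) - 1) with (S j) by lia; replace (S (S j) - 2) with j by lia;
      repeat split; intros; simpl in *; auto using iso_refl; try lia;
      apply log2_up_between; simpl; lia.
Qed.
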